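(* Let $a,c,p\in\mathbb{C}$ with $-c\notin\mathbb{N}\cup\{0\}$ and $c\neq2$. Write $\cos(pz)M(a,c;z)=\sum_{n=0}^\infty u_nz^n$, $z\in\mathbb{C}$. Then $u_0=1$, $u_1=\frac ac$, $u_2=\frac12\left(\frac{a^2+a}{c^2+c}-p^2\right)$, $u_3=\frac{a}{6c}\left(\frac{(a+1)(a+2)}{(c+1)(c+2)}-3p^2\right)$, \[ u_4=\frac1{24}\left(-\frac{6a(a+1)p^2}{c(c+1)}+\frac{a(a+1)(a+2)(a+3)}{c(c+1)(c+2)(c+3)}+p^4\right), \] \[ u_5=\frac{a}{120c}\left(-\frac{10(a+1)(a+2)p^2}{(c+1)(c+2)}+\frac{(a+1)(a+2)(a+3)(a+4)}{(c+1)(c+2)(c+3)(c+4)}+5p^4\right), \] and for all integers $n\ge5$, \[ u_{n+1}=\sum_{i=0}^5\beta_i(n)u_{n-i}, \] where, with $D(n)=(c-2)c\,n(n+1)(c+n-1)(c+n)$, \[ \beta_0(n)=\frac{2\left(a\left(c^2-2cn+c-2(n-2)^2\right)+c(n-1)(2c+n-5)\right)}{(c-2)c(n+1)(c+n)}, \] \[ \beta_1(n)=\frac{1}{D(n)}\Big[-(n-4)(n-3)(n-2)(n-1)(4p^2+1)+2(n-3)(n-2)(n-1)\big(4a-c(4p^2+3)\big) +(n-2)(n-1)\big(8a^2+a(4c+6)-6c((c-2)p^2+c)+c\big) +2(n-1)\big(a^2(4c-2)-3a(c-1)c+c(-c^2+c+2)p^2\big) -(c-2)\big(a^2(c+2)-ac+c^2(c+1)p^2\big)\Big],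 \] \[ \beta_2(n)=\frac{1}{D(n)}\Big[-2p^2(c-3)\big(a(3c+8)-2c^2+c-32\big)+2p^2\big(n(-10a+c(3c-31)+104)+6(c-6)n^2+4n^3\big) -2(a+n-3)\big(2a^2-a(c-2n+3)-(n-2)(2c+n-4)\big)\Big], \] \[ \beta_3(n)=-\frac{1}{D(n)}\Big[p^2\big(12a^2-2a(6c+5)+c(6c-1)\big)+2(n-3)\big(a+c(4p^2+3)p^2\big) +(a-1)a+5(c-2)cp^4+(n-4)(n-3)(8p^4+6p^2+1)\Big], \] \[ \beta_4(n)=\frac{2p^2\left(p^2(-6a+5c+4(n-4))-3a+2c+n-4\right)}{D(n)},\qquad \beta_5(n)=-\frac{p^2(4p^4+5p^2+1)}{D(n)}. \]
   Context: For $a\in\mathbb{C}$, $(a)_n=a(a+1)\cdots(a+n-1)$ denotes the Pochhammer symbol, with $(a)_0=1$. For $a,c\in\mathbb{C}$ with $-c\notin\mathbb{N}\cup\{0\}$, the confluent hypergeometric (Kummer) function is $M(a,c;z)=\sum_{n=0}^\infty \frac{(a)_n}{(c)_n\,n!}z^n$, $z\in\mathbb{C}$. *)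

From Stdlib Require Import Reals Factorial.
From Coquelicot Require Import Coquelicot.

Open Scope C_scope.

Definition csum (a : nat -> C) : C :=
  @lim C_CompleteNormedModule (filtermap (fun N => @sum_n C_AbelianMonoid a N) eventually).

Definition nC (n : nat) : C := RtoC (INR n).

Fixpoint poch (a : C) (n : nat) : C :=
  match n with
  | O => 1
  | S k => poch a k * (a + nC k)
  end.

Definition kummerM (a c z : C) : C :=
  csum (fun n => poch a n / (poch c n * nC (fact n)) * z ^ n).

Definition ccos (w : C) : C :=
  csum (fun k => (-1) ^ k * w ^ (2 * k) / nC (fact (2 * k))).

Definition Dn (c : C) (n : nat) : C :=
  (c - 2) * c * nC n * (nC n + 1) * (c + nC n - 1) * (c + nC n).

Definition beta0 (a c : C) (n : nat) : C :=
  2 * (a * (c ^ 2 - 2 * c * nC n + c - 2 * (nC n - 2) ^ 2)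
       + c * (nC n - 1) * (2 * c + nC n - 5))
  / ((c - 2) * c * (nC n + 1) * (c + nC n)).

Definition beta1 (a c p : C) (n : nat) : C :=
  let N := nC n in
  ( - (N - 4) * (N - 3) * (N - 2) * (N - 1) * (4 * p ^ 2 + 1)
    + 2 * (N - 3) * (N - 2) * (N - 1) * (4 * a - c * (4 * p ^ 2 + 3))
    + (N - 2) * (N - 1) * (8 * a ^ 2 + a * (4 * c + 6) - 6 * c * ((c - 2) * p ^ 2 + c) + c)
    + 2 * (N - 1) * (a ^ 2 * (4 * c - 2) - 3 * a * (c - 1) * c + c * (- c ^ 2 + c + 2) * p ^ 2)
    - (c - 2) * (a ^ 2 * (c + 2) - a * c + c ^ 2 * (c + 1) * p ^ 2) )
  / Dn c n.

Definition beta2 (a c p : C) (n : nat) : C :=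
  let N := nC n in
  ( - 2 * p ^ 2 * (c - 3) * (a * (3 * c + 8) - 2 * c ^ 2 + c - 32)
    + 2 * p ^ 2 * (N * (- 10 * a + c * (3 * c - 31) + 104) + 6 * (c - 6) * N ^ 2 + 4 * N ^ 3)
    - 2 * (a + N - 3) * (2 * a ^ 2 - a * (c - 2 * N + 3) - (N - 2) * (2 * c + N - 4)) )
  / Dn c n.

Definition beta3 (a c p : C) (n : nat) : C :=
  let N := nC n in
  - ( p ^ 2 * (12 * a ^ 2 - 2 * a * (6 * c + 5) + c * (6 * c - 1))
      + 2 * (N - 3) * (a + c * (4 * p ^ 2 + 3) * p ^ 2)
      + (a - 1) * a + 5 * (c - 2) * c * p ^ 4
      + (N - 4) * (N - 3) * (8 * p ^ 4 + 6 * p ^ 2 + 1) )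
  / Dn c n.

Definition beta4 (a c p : C) (n : nat) : C :=
  2 * p ^ 2 * (p ^ 2 * (- 6 * a + 5 * c + 4 * (nC n - 4)) - 3 * a + 2 * c + nC n - 4)
  / Dn c n.

Definition beta5 (a c p : C) (n : nat) : C :=
  - (p ^ 2 * (4 * p ^ 4 + 5 * p ^ 2 + 1)) / Dn c n.

From Stdlib Require Import Reals Factorial Lia Lra.
From Coquelicot Require Import Coquelicot.
Open Scope C_scope.

(* Write θ = z d/dz. Then f(z) = cos(pz) satisfies θ²f = θf - p²z²f and Kummer's function
   g(z) = M(a,c;z) satisfies θ²g = (1-c)θg + z(θg + ag). Since θ is a derivation, the four
   products fg, f·θg, θf·g and θf·θg are mapped by θ into their span over C[z], which on
   Taylor coefficients gives four first-order relations. Eliminating the coefficients of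
   f·θg and θf·θg leaves two coupled recurrences for the coefficients u of fg and w of θf·g;
   eliminating w yields the six-term recurrence after division by D(n), which is where
   c ≠ 0, 2 and c + n ≠ 0 are needed. Finally, the power series of f and g converge
   absolutely, so their Cauchy product sums to fg, and uniqueness of power series
   coefficients identifies its coefficients with the u_n of the statement. *)

Lemma nC_0 : nC 0 = 0.
Proof. reflexivity. Qed.

Lemma nC_S n : nC (S n) = nC n + 1.
Proof. unfold nC. now rewrite S_INR, RtoC_plus. Qed.

Lemma nC_sub n k : (k <= n)%nat -> nC (n - k) = nC n - nC k.
Proof. intro Hk. unfold nC. now rewrite minus_INR, RtoC_minus. Qed.

Lemma nC_mult m n : nC (m * n) = nC m * nC n.
Proof. unfold nC. now rewrite mult_INR, RtoC_mult. Qed.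

Lemma nC_neq_0 n : (0 < n)%nat -> nC n <> 0.
Proof. intros Hn H. apply (not_O_INR n); [lia|]. now injection H. Qed.

Lemma nC_fact_neq_0 n : nC (fact n) <> 0.
Proof. apply nC_neq_0, lt_O_fact. Qed.

Lemma Cmod_nC n : Cmod (nC n) = INR n.
Proof. unfold nC. rewrite Cmod_R. apply Rabs_pos_eq, pos_INR. Qed.

Lemma Ceq_by_residual (x y x' y' k : C) : x' = y' -> x - y = k * (x' - y') -> x = y.
Proof. intros H' H. apply Ceq_minus. rewrite H, H'. ring. Qed.

Section PochhammerNonzero.
Variable c : C.
Hypothesis hc : forall k : nat, c <> - nC k.

Lemma Cplus_nC_neq_0 k : c + nC k <> 0.
Proof. intro H. apply (hc k). rewrite <- (Cplus_0_r (- nC k)), <- H. ring. Qed.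

Lemma poch_neq_0 n : poch c n <> 0.
Proof.
  induction n as [|n IH]; simpl.
  - intro H. injection H. lra.
  - apply Cmult_neq_0; [exact IH | apply Cplus_nC_neq_0].
Qed.

End PochhammerNonzero.

(** * Power series as coefficient sequences *)

Definition conv (x y : nat -> C) (n : nat) : C :=
  sum_n (fun k => x k * y (n - k)%nat) n.

(* On coefficient sequences, [theta] acts as z d/dz and [shift] as multiplication by z. *)
Definition theta (x : nat -> C) (n : nat) : C := nC n * x n.

Definition shift (x : nat -> C) (n : nat) : C :=
  match n with O => 0 | S k => x k end.

Lemma conv_ext x x' y y' n :
  (forall k, x k = x' k) -> (forall k, y k = y' k) -> conv x y n = conv x' y' n.
Proof. intros Hx Hy. apply sum_n_ext. intro k. now rewrite Hx, Hy. Qed.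

Lemma conv_plus_l x x' y n : conv (fun k => x k + x' k) y n = conv x y n + conv x' y n.
Proof.
  unfold conv. rewrite <- (sum_n_plus (G := C_AbelianMonoid)).
  apply sum_n_ext. intro k. apply Cmult_plus_distr_r.
Qed.

Lemma conv_plus_r x y y' n : conv x (fun k => y k + y' k) n = conv x y n + conv x y' n.
Proof.
  unfold conv. rewrite <- (sum_n_plus (G := C_AbelianMonoid)).
  apply sum_n_ext. intro k. apply Cmult_plus_distr_l.
Qed.

Lemma conv_scal_l s x y n : conv (fun k => s * x k) y n = s * conv x y n.
Proof.
  unfold conv. rewrite <- (sum_n_mult_l (K := C_Ring)).
  apply sum_n_ext. intro k. apply eq_sym, Cmult_assoc.
Qed.

Lemma conv_scal_r s x y n : conv x (fun k => s * y k) n = s * conv x y n.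
Proof.
  unfold conv. rewrite <- (sum_n_mult_l (K := C_Ring)).
  apply sum_n_ext. intro k. change (x k * (s * y (n - k)%nat) = s * (x k * y (n - k)%nat)). ring.
Qed.

Lemma conv_shift_r x y n : conv x (shift y) n = shift (conv x y) n.
Proof.
  destruct n as [|n]; unfold conv.
  - rewrite !sum_O. simpl. ring.
  - rewrite sum_Sn, Nat.sub_diag. simpl shift.
    change (sum_n (fun k => x k * shift y (S n - k)%nat) n + x (S n) * 0
            = sum_n (fun k => x k * y (n - k)%nat) n).
    rewrite Cmult_0_r, Cplus_0_r.
    apply sum_n_ext_loc. intros k Hk. now replace (S n - k)%nat with (S (n - k)) by lia.
Qed.

Lemma conv_shift_l x y n : conv (shift x) y n = shift (conv x y) n.
Proof.
  destruct n as [|n]; unfold conv.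
  - rewrite !sum_O. simpl. ring.
  - unfold sum_n. rewrite sum_Sn_m by lia. rewrite <- sum_n_m_S. simpl shift.
    change (0 * y (S n) + sum_n_m (fun k => x k * y (S n - S k)%nat) 0 n
            = sum_n_m (fun k => x k * y (n - k)%nat) 0 n).
    now rewrite Cmult_0_l, Cplus_0_l.
Qed.

Lemma theta_conv x y n : theta (conv x y) n = conv (theta x) y n + conv x (theta y) n.
Proof.
  unfold theta, conv.
  rewrite <- (sum_n_plus (G := C_AbelianMonoid)), <- (sum_n_mult_l (K := C_Ring)).
  apply sum_n_ext_loc. intros k Hk. rewrite nC_sub by exact Hk.
  change (nC n * (x k * y (n - k)%nat)
          = nC k * x k * y (n - k)%nat + x k * ((nC n - nC k) * y (n - k)%nat)). ring.
Qed.

Lemma conv_pow (f g : nat -> C) z n :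
  conv (fun k => f k * z ^ k) (fun k => g k * z ^ k) n = conv f g n * z ^ n.
Proof.
  unfold conv. rewrite <- (sum_n_mult_r (K := C_Ring)). apply sum_n_ext_loc. intros k Hk.
  change (f k * z ^ k * (g (n - k)%nat * z ^ (n - k)) = f k * g (n - k)%nat * z ^ n).
  replace (z ^ n) with (z ^ k * z ^ (n - k)) by (rewrite <- Cpow_add_r; f_equal; lia). ring.
Qed.

(** * The recurrence *)

Section ProductRecurrences.
Variables (a c p : C) (f g : nat -> C).
Hypothesis f_ode : forall n, theta (theta f) n = theta f n - p ^ 2 * shift (shift f) n.
(* Kummer's equation z g'' + (c - z) g' - a g = 0, multiplied by z. *)
Hypothesis g_ode :
  forall n, theta (theta g) n = (1 - c) * theta g n + shift (fun k => theta g k + a * g k) n.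

Let u := conv f g.
Let v := conv f (theta g).
Let w := conv (theta f) g.
Let e := conv (theta f) (theta g).

Lemma theta_u n : nC n * u n = v n + w n.
Proof. rewrite Cplus_comm. exact (theta_conv f g n). Qed.

Lemma theta_v n : nC n * v n = e n + (1 - c) * v n + shift (fun k => v k + a * u k) n.
Proof.
  change (theta v n = e n + (1 - c) * v n + shift (fun k => v k + a * u k) n).
  unfold v. rewrite theta_conv. rewrite (conv_ext _ _ _ _ _ (fun k => eq_refl) g_ode).
  rewrite conv_plus_r, conv_scal_r, conv_shift_r. destruct n as [|n]; simpl shift;
  [|rewrite conv_plus_r, conv_scal_r]; unfold e, u; ring.
Qed.

Lemma theta_w n : nC n * w n = w n + e n - p ^ 2 * shift (shift u) n.
Proof.
  change (theta w n = w n + e n - p ^ 2 * shift (shift u) n).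
  unfold w. rewrite theta_conv.
  rewrite (conv_ext _ (fun k => theta f k + (- p ^ 2) * shift (shift f) k) g g);
    [| intro k; rewrite f_ode; ring | reflexivity].
  rewrite conv_plus_l, conv_scal_l, conv_shift_l.
  destruct n as [|n]; simpl shift; [|rewrite conv_shift_l]; unfold e, u; ring.
Qed.

Lemma theta_e n :
  nC n * e n = e n - p ^ 2 * shift (shift v) n + (1 - c) * e n + shift (fun k => e k + a * w k) n.
Proof.
  change (theta e n = e n - p ^ 2 * shift (shift v) n + (1 - c) * e n
                      + shift (fun k => e k + a * w k) n).
  unfold e. rewrite theta_conv.
  rewrite (conv_ext _ (fun k => theta f k + (- p ^ 2) * shift (shift f) k) _ (theta g));
    [| intro k; rewrite f_ode; ring | reflexivity].
  rewrite (conv_ext (theta f) (theta f) _ (fun k => (1 - c) * theta g k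
                                                  + shift (fun k => theta g k + a * g k) k));
    [| reflexivity | exact g_ode].
  rewrite conv_plus_l, conv_plus_r, conv_scal_l, conv_scal_r, conv_shift_l, conv_shift_r.
  destruct n as [|n]; simpl shift; [|rewrite conv_shift_l, conv_plus_r, conv_scal_r];
    unfold v, w; ring.
Qed.

Lemma v_eq n : v n = nC n * u n - w n.
Proof. apply (Ceq_by_residual _ _ _ _ (-1) (theta_u n)). ring. Qed.

Lemma e_eq n : e n = (nC n - 1) * w n + p ^ 2 * shift (shift u) n.
Proof. apply (Ceq_by_residual _ _ _ _ (-1) (theta_w n)). ring. Qed.

Lemma coupled_rec1 n :
  (2 * nC n + c + 2) * w (S (S n)) - w (S n)
  = (nC n + 2) * (nC n + c + 1) * u (S (S n)) - (nC n + a + 1) * u (S n) - p ^ 2 * u n.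
Proof.
  pose proof (theta_v (S (S n))) as H. simpl shift in H.
  rewrite !v_eq, e_eq in H. simpl shift in H. rewrite !nC_S in H.
  apply (Ceq_by_residual _ _ _ _ (-1) H). ring.
Qed.

Lemma coupled_rec2 n :
  (nC n + 2) * (nC n + c + 1) * w (S (S (S n))) - (nC n + a + 1) * w (S (S n)) - p ^ 2 * w (S n)
  = p ^ 2 * u n - p ^ 2 * (2 * nC n + c + 2) * u (S n).
Proof.
  pose proof (theta_e (S (S (S n)))) as H. simpl shift in H.
  rewrite !e_eq, v_eq in H. simpl shift in H. rewrite !nC_S in H.
  apply (Ceq_by_residual _ _ _ _ 1 H). ring.
Qed.

End ProductRecurrences.

Definition cos_coef (p : C) (n : nat) : C :=
  if Nat.even n then (-1) ^ Nat.div2 n * p ^ n / nC (fact n) else 0.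

Definition kummer_coef (a c : C) (n : nat) : C := poch a n / (poch c n * nC (fact n)).

Lemma cos_coef_ode p n :
  theta (theta (cos_coef p)) n = theta (cos_coef p) n - p ^ 2 * shift (shift (cos_coef p)) n.
Proof.
  unfold theta. destruct n as [|[|n]]; simpl shift.
  - rewrite nC_0. ring.
  - rewrite nC_S, nC_0. ring.
  - unfold cos_coef. simpl Nat.even. simpl Nat.div2. destruct (Nat.even n); [|ring].
    change (fact (S (S n))) with (S (S n) * (S n * fact n))%nat.
    pose proof (nC_fact_neq_0 n). pose proof (nC_neq_0 (S n) (Nat.lt_0_succ n)).
    pose proof (nC_neq_0 (S (S n)) (Nat.lt_0_succ (S n))).
    rewrite !nC_mult, !nC_S in *. simpl Cpow. field. auto.
Qed.

Lemma kummer_coef_ode a c (hc : forall k : nat, c <> - nC k) n :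
  theta (theta (kummer_coef a c)) n
  = (1 - c) * theta (kummer_coef a c) n
    + shift (fun k => theta (kummer_coef a c) k + a * kummer_coef a c k) n.
Proof.
  unfold theta. destruct n as [|n]; simpl shift.
  - rewrite nC_0. ring.
  - unfold kummer_coef. simpl poch. change (fact (S n)) with (S n * fact n)%nat.
    pose proof (nC_fact_neq_0 n). pose proof (nC_neq_0 (S n) (Nat.lt_0_succ n)).
    pose proof (poch_neq_0 c hc n). pose proof (Cplus_nC_neq_0 c hc n).
    rewrite nC_mult, !nC_S in *. field. auto.
Qed.

Section Elimination.
Variables (a c p : C) (u w : nat -> C).
Hypothesis rec1 : forall n,
  (2 * nC n + c + 2) * w (S (S n)) - w (S n)
  = (nC n + 2) * (nC n + c + 1) * u (S (S n)) - (nC n + a + 1) * u (S n) - p ^ 2 * u n.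
Hypothesis rec2 : forall n,
  (nC n + 2) * (nC n + c + 1) * w (S (S (S n))) - (nC n + a + 1) * w (S (S n)) - p ^ 2 * w (S n)
  = p ^ 2 * u n - p ^ 2 * (2 * nC n + c + 2) * u (S n).

Let res1 n :=
  (2 * nC n + c + 2) * w (S (S n)) - w (S n)
  - ((nC n + 2) * (nC n + c + 1) * u (S (S n)) - (nC n + a + 1) * u (S n) - p ^ 2 * u n).
Let res2 n :=
  (nC n + 2) * (nC n + c + 1) * w (S (S (S n))) - (nC n + a + 1) * w (S (S n)) - p ^ 2 * w (S n)
  - (p ^ 2 * u n - p ^ 2 * (2 * nC n + c + 2) * u (S n)).

Lemma beta_recurrence (hc : forall k : nat, c <> - nC k) (hc2 : c <> 2) n : (5 <= n)%nat ->
  u (S n) = beta0 a c n * u n + beta1 a c p n * u (n - 1)%nat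
          + beta2 a c p n * u (n - 2)%nat + beta3 a c p n * u (n - 3)%nat
          + beta4 a c p n * u (n - 4)%nat + beta5 a c p n * u (n - 5)%nat.
Proof.
  intro Hn. destruct n as [|[|[|[|[|k]]]]]; try lia. cbn [Nat.sub]. rewrite Nat.sub_0_r.
  assert (Hc0 : c <> 0) by (rewrite <- (Cplus_0_r c); exact (Cplus_nC_neq_0 c hc 0)).
  assert (Hc2 : c - 2 <> 0) by (intro H; apply hc2, Ceq_minus, H).
  assert (Hx0 := nC_neq_0 (S (S (S (S (S k))))) ltac:(lia)).
  assert (Hx1 := nC_neq_0 (S (S (S (S (S (S k)))))) ltac:(lia)).
  assert (Hcx := Cplus_nC_neq_0 c hc (S (S (S (S (S k)))))).
  assert (Hcx1 : c + nC (S (S (S (S (S k))))) - 1 <> 0).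
  { intro H. apply (Cplus_nC_neq_0 c hc (S (S (S (S k))))).
    rewrite <- H, (nC_S (S (S (S (S k))))). ring. }
  rewrite nC_S in Hx1.
  apply Ceq_minus.
  unfold beta0, beta1, beta2, beta3, beta4, beta5, Dn.
  set (x := nC (S (S (S (S (S k)))))) in *.
  assert (Hk : nC k = x - 5) by (unfold x; rewrite !nC_S; ring).
  (* The multipliers (x stands for n) come from eliminating w by linear algebra over
     Q(a, c, p, x); [field] only checks the resulting identity. *)
  transitivity (/ ((c - 2) * c * x * (x + 1) * (c + x - 1) * (c + x)) *
    (  p ^ 2 * (4 * p ^ 2 + 1) * res1 k
     + (x + a - 4 + 2 * p ^ 2 * (2 * x + 4 * a - c - 8)) * res1 (S k)
     - (x ^ 2 - 4 * x * a + 3 * x * c - 4 * a ^ 2 + 2 * a * c - 7 * x + 10 * a - 8 * c + 12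
        + p ^ 2 * (4 * x ^ 2 + 4 * x * c - c ^ 2 - 28 * x - 10 * c + 48)) * res1 (S (S k))
     + (c * (2 * x ^ 2 + 3 * x * c - 10 * x - 4 * c + 10)
        - a * (4 * x ^ 2 + 4 * x * c - c ^ 2 - 16 * x - 4 * c + 16)) * res1 (S (S (S k)))
     - c * (c - 2) * x * (x + c - 1) * res1 (S (S (S (S k))))
     - (4 * p ^ 2 + 1) * res2 k
     + (2 * x - 4 * a + 3 * c - 8 + 4 * p ^ 2 * (2 * x + c - 8)) * res2 (S k)
     + (4 * a * (2 * x + c - 4) - c * (4 * x + 3 * c - 10)) * res2 (S (S k))
     + c * (c - 2) * (2 * x + c) * res2 (S (S (S k))))).
  - unfold res1, res2. rewrite !nC_S, Hk. clearbody x. field. repeat split; assumption.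
  - unfold res1, res2.
    rewrite !(proj1 (Ceq_minus _ _) (rec1 _)), !(proj1 (Ceq_minus _ _) (rec2 _)). ring.
Qed.

End Elimination.

Lemma cos_kummer_initial_coefs (a c p : C) (u : nat -> C) (hc : forall k : nat, c <> - nC k)
  (hu : forall n, u n = conv (cos_coef p) (kummer_coef a c) n) :
  u 0%nat = 1 /\
  u 1%nat = a / c /\
  u 2%nat = / 2 * ((a ^ 2 + a) / (c ^ 2 + c) - p ^ 2) /\
  u 3%nat = a / (6 * c) * ((a + 1) * (a + 2) / ((c + 1) * (c + 2)) - 3 * p ^ 2) /\
  u 4%nat = / 24 * ( - (6 * a * (a + 1) * p ^ 2) / (c * (c + 1))
                     + a * (a + 1) * (a + 2) * (a + 3) / (c * (c + 1) * (c + 2) * (c + 3))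
                     + p ^ 4) /\
  u 5%nat = a / (120 * c) * ( - (10 * (a + 1) * (a + 2) * p ^ 2) / ((c + 1) * (c + 2))
                     + (a + 1) * (a + 2) * (a + 3) * (a + 4) / ((c + 1) * (c + 2) * (c + 3) * (c + 4))
                     + 5 * p ^ 4).
Proof.
  assert (Hcs : forall k : nat, c + RtoC (IZR (Z.of_nat k)) <> 0).
  { intro k. rewrite <- INR_IZR_INZ. exact (Cplus_nC_neq_0 c hc k). }
  pose proof (Hcs 0%nat) as H0. pose proof (Hcs 1%nat) as H1. pose proof (Hcs 2%nat) as H2.
  pose proof (Hcs 3%nat) as H3. pose proof (Hcs 4%nat) as H4. simpl in H0, H1, H2, H3, H4.
  rewrite Cplus_0_r in H0.
  assert (H01 : c ^ 2 + c <> 0)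
    by (replace (c ^ 2 + c) with (c * (c + 1)) by ring; now apply Cmult_neq_0).
  rewrite !hu. unfold conv. rewrite !sum_Sn, !sum_O. unfold cos_coef, kummer_coef.
  cbn -[nC Cpow Cmult Cplus Cdiv Cinv Copp Cminus].
  unfold nC. rewrite !INR_IZR_INZ. simpl Z.of_nat.
  repeat split; field; repeat split; assumption.
Qed.

(** * Convergence *)

Lemma is_series_csum_unique (t : nat -> C) (l : C) : is_series t l -> csum t = l.
Proof.
  intro H. unfold csum.
  set (F := filtermap (fun N => sum_n t N) eventually).
  assert (FF : ProperFilter F) by apply filtermap_proper_filter, eventually_filter.
  apply (@is_filter_lim_unique _ _ F (Proper_StrongProper _ FF)); [| exact H].
  assert (HF : cauchy F) by (intro eps; exists l; apply H, locally_ball).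
  intros P [eps HP].
  exact (filter_imp _ _ HP (@complete_cauchy C_CompleteNormedModule F FF HF eps)).
Qed.

Lemma sum_n_Re (t : nat -> C) n : Re (sum_n t n) = sum_n (fun k => Re (t k)) n.
Proof. induction n as [|n IH]; [now rewrite !sum_O | now rewrite !sum_Sn, <- IH]. Qed.

Lemma sum_n_Im (t : nat -> C) n : Im (sum_n t n) = sum_n (fun k => Im (t k)) n.
Proof. induction n as [|n IH]; [now rewrite !sum_O | now rewrite !sum_Sn, <- IH]. Qed.

Lemma is_series_C_iff (t : nat -> C) (l : C) :
  is_series t l <->
  is_series (fun n => Re (t n)) (Re l) /\ is_series (fun n => Im (t n)) (Im l).
Proof.
  unfold is_series. split.
  - intro H. split; apply filterlim_locally; intro eps;
      generalize (proj1 (filterlim_locally _ _) H eps); apply filter_imp; intros n [Hre Him].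
    + rewrite <- sum_n_Re. exact Hre.
    + rewrite <- sum_n_Im. exact Him.
  - intros [Hre Him]. apply filterlim_locally. intro eps.
    generalize (filter_and _ _ (proj1 (filterlim_locally _ _) Hre eps)
                               (proj1 (filterlim_locally _ _) Him eps)).
    apply filter_imp. intros n [Hn1 Hn2]. split.
    + change (ball (Re l) eps (Re (sum_n t n))). now rewrite sum_n_Re.
    + change (ball (Im l) eps (Im (sum_n t n))). now rewrite sum_n_Im.
Qed.

Lemma Im_le_Cmod (z : C) : (Rabs (Im z) <= Cmod z)%R.
Proof.
  pose proof (re_le_Cmod (- Ci * z)) as H.
  rewrite Cmod_mult, Cmod_opp, Cmod_Ci, Rmult_1_l in H.
  replace (Re (- Ci * z)) with (Im z) in H by (unfold Re, Im; simpl; ring). exact H.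
Qed.

Lemma ex_series_Rabs_of_Cmod (h : C -> R) (t : nat -> C) :
  (forall z, Rabs (h z) <= Cmod z)%R ->
  ex_series (fun n => Cmod (t n)) -> ex_series (fun n => Rabs (h (t n))).
Proof.
  intros Hh. apply (@ex_series_le R_AbsRing R_CompleteNormedModule). intro n.
  change (Rabs (Rabs (h (t n))) <= Cmod (t n))%R. rewrite Rabs_Rabsolu. apply Hh.
Qed.

Lemma is_series_conv (f g : nat -> C) (lf lg : C) :
  is_series f lf -> is_series g lg ->
  ex_series (fun n => Cmod (f n)) -> ex_series (fun n => Cmod (g n)) ->
  is_series (conv f g) (lf * lg).
Proof.
  intros Hf Hg Af Ag.
  apply is_series_C_iff in Hf as [Hf1 Hf2]. apply is_series_C_iff in Hg as [Hg1 Hg2].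
  pose proof (ex_series_Rabs_of_Cmod Re f re_le_Cmod Af) as Af1.
  pose proof (ex_series_Rabs_of_Cmod Im f Im_le_Cmod Af) as Af2.
  pose proof (ex_series_Rabs_of_Cmod Re g re_le_Cmod Ag) as Ag1.
  pose proof (ex_series_Rabs_of_Cmod Im g Im_le_Cmod Ag) as Ag2.
  apply is_series_C_iff. split.
  - replace (Re (lf * lg)) with (Re lf * Re lg - Im lf * Im lg)%R by (unfold Re, Im; simpl; ring).
    eapply is_series_ext; [| exact (is_series_minus _ _ _ _ (is_series_mult _ _ _ _ Hf1 Hg1 Af1 Ag1)
                                                        (is_series_mult _ _ _ _ Hf2 Hg2 Af2 Ag2))].
    intro n. unfold conv. rewrite sum_n_Re, sum_n_Reals.
    change (sum_f_R0 (fun k => Re (f k) * Re (g (n - k)%nat)) n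
            - sum_f_R0 (fun k => Im (f k) * Im (g (n - k)%nat)) n
            = sum_f_R0 (fun k => Re (f k * g (n - k)%nat)) n)%R.
    now rewrite <- minus_sum.
  - replace (Im (lf * lg)) with (Re lf * Im lg + Im lf * Re lg)%R by (unfold Re, Im; simpl; ring).
    eapply is_series_ext; [| exact (is_series_plus _ _ _ _ (is_series_mult _ _ _ _ Hf1 Hg2 Af1 Ag2)
                                                       (is_series_mult _ _ _ _ Hf2 Hg1 Af2 Ag1))].
    intro n. unfold conv. rewrite sum_n_Im, sum_n_Reals.
    change (sum_f_R0 (fun k => Re (f k) * Im (g (n - k)%nat)) n
            + sum_f_R0 (fun k => Im (f k) * Re (g (n - k)%nat)) n
            = sum_f_R0 (fun k => Im (f k * g (n - k)%nat)) n)%R.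
    now rewrite <- plus_sum.
Qed.

Lemma pseries_zero_coef_R (r : nat -> R) :
  (forall x : R, is_series (fun n => r n * x ^ n)%R 0%R) -> forall n, r n = 0%R.
Proof.
  intros H n.
  assert (Hrad : Rbar_lt 0 (CV_radius r)).
  { destruct (filterlim_bounded (fun n => r n * 1 ^ n)%R) as [M HM].
    { exists 0%R. apply ex_series_lim_0. eexists. apply H. }
    apply (Rbar_lt_le_trans _ 1%R); [simpl; lra|].
    apply (proj1 (CV_radius_bounded r)). now exists M. }
  apply (PSeries_ext_recip r (fun _ => 0%R) n Hrad); [rewrite CV_radius_const_0; exact I|].
  apply filter_forall. intro x. rewrite PSeries_const_0.
  apply is_pseries_unique, is_pseries_R, H.
Qed.

Lemma pseries_zero_coef (d : nat -> C) :
  (forall x : R, is_series (fun n => d n * RtoC x ^ n) (RtoC 0)) -> forall n, d n = 0.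
Proof.
  intros H n.
  assert (Hparts : forall x n, Re (d n * RtoC x ^ n) = (Re (d n) * x ^ n)%R
                               /\ Im (d n * RtoC x ^ n) = (Im (d n) * x ^ n)%R).
  { intros x k. rewrite <- RtoC_pow. unfold Re, Im. simpl. split; ring. }
  assert (Hre : forall k, Re (d k) = 0%R).
  { apply pseries_zero_coef_R. intro x.
    exact (is_series_ext _ _ _ (fun k => proj1 (Hparts x k))
                         (proj1 (proj1 (is_series_C_iff _ _) (H x)))). }
  assert (Him : forall k, Im (d k) = 0%R).
  { apply pseries_zero_coef_R. intro x.
    exact (is_series_ext _ _ _ (fun k => proj2 (Hparts x k))
                         (proj2 (proj1 (is_series_C_iff _ _) (H x)))). }
  apply injective_projections; [apply Hre | apply Him].
Qed.

Lemma is_series_csum (t : nat -> C) :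
  ex_series (fun n => Cmod (t n)) -> is_series t (csum t).
Proof.
  intro H.
  destruct (@ex_series_le C_AbsRing C_CompleteNormedModule t _ (fun n => Rle_refl _) H) as [l Hl].
  now rewrite (is_series_csum_unique t l Hl).
Qed.

Lemma ex_series_ratio_half (t : nat -> C) (N : nat) :
  (forall n, (N <= n)%nat -> Cmod (t (S n)) <= Cmod (t n) / 2)%R ->
  ex_series (fun n => Cmod (t n)).
Proof.
  intro Hr. apply (ex_series_incr_n _ N).
  apply (@ex_series_le R_AbsRing R_CompleteNormedModule _ (fun k => Cmod (t N) * (/ 2) ^ k)%R).
  - intro k. change (Rabs (Cmod (t (N + k)%nat)) <= Cmod (t N) * (/ 2) ^ k)%R.
    rewrite Rabs_pos_eq by apply Cmod_ge_0.
    induction k as [|k IH].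
    + rewrite Nat.add_0_r. simpl. lra.
    + replace (N + S k)%nat with (S (N + k)) by lia.
      specialize (Hr (N + k)%nat ltac:(lia)). simpl. lra.
  - apply (@ex_series_scal_l R_AbsRing R_NormedModule (Cmod (t N)) (fun k => (/ 2) ^ k)%R).
    apply ex_series_geom. rewrite Rabs_pos_eq; lra.
Qed.

Lemma kummer_term_S a c (hc : forall k : nat, c <> - nC k) z n :
  kummer_coef a c (S n) * z ^ S n
  = kummer_coef a c n * z ^ n * ((a + nC n) * z / ((c + nC n) * nC (S n))).
Proof.
  unfold kummer_coef. simpl poch. change (fact (S n)) with (S n * fact n)%nat.
  pose proof (nC_fact_neq_0 n). pose proof (nC_neq_0 (S n) (Nat.lt_0_succ n)).
  pose proof (poch_neq_0 c hc n). pose proof (Cplus_nC_neq_0 c hc n).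
  rewrite nC_mult. simpl Cpow. field. auto.
Qed.

Lemma kummer_ratio_le_half a c (hc : forall k : nat, c <> - nC k) z :
  exists N : nat, forall n, (N <= n)%nat ->
    (Cmod ((a + nC n) * z / ((c + nC n) * nC (S n))) <= / 2)%R.
Proof.
  set (A := Cmod a). set (K := Cmod c). set (Z := Cmod z).
  assert (HA : (0 <= A)%R) by apply Cmod_ge_0.
  assert (HK : (0 <= K)%R) by apply Cmod_ge_0.
  assert (HZ : (0 <= Z)%R) by apply Cmod_ge_0.
  assert (HZA : (0 <= Z * (A + 1))%R) by (apply Rmult_le_pos; lra).
  destruct (INR_archimed 1 (2 * K + 4 * Z * (A + 1) + 1)) as [N HN]; [lra|].
  exists N. intros n Hn.
  assert (Hx : (2 * K + 4 * Z * (A + 1) + 1 < INR n)%R) by (apply le_INR in Hn; lra).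
  pose proof (Cplus_nC_neq_0 c hc n). pose proof (nC_neq_0 (S n) (Nat.lt_0_succ n)).
  rewrite Cmod_div, !Cmod_mult, Cmod_nC, S_INR by (now apply Cmult_neq_0). fold Z.
  assert (HP : (Cmod (a + nC n) <= A + INR n)%R).
  { rewrite <- (Cmod_nC n). apply Cmod_triangle. }
  assert (HQ : (INR n - K <= Cmod (c + nC n))%R).
  { pose proof (Cmod_triangle (c + nC n) (- c)) as Htri.
    replace (c + nC n + - c) with (nC n) in Htri by ring.
    rewrite Cmod_nC, Cmod_opp in Htri. fold K in Htri. lra. }
  set (x := INR n) in *.
  assert (HPZ : (Cmod (a + nC n) * Z <= (x + 1) * (x / 4))%R).
  { apply (Rle_trans _ ((A + x) * Z)); [now apply Rmult_le_compat_r|].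
    assert (0 <= A * x * Z)%R by (apply Rmult_le_pos; [apply Rmult_le_pos|]; lra).
    apply (Rle_trans _ ((x + 1) * ((A + 1) * Z))); [nra|].
    apply Rmult_le_compat_l; lra. }
  apply Rle_div_l; [apply Rmult_lt_0_compat; lra|]. nra.
Qed.

Lemma ex_series_kummer a c (hc : forall k : nat, c <> - nC k) z :
  ex_series (fun n => Cmod (kummer_coef a c n * z ^ n)).
Proof.
  destruct (kummer_ratio_le_half a c hc z) as [N HN].
  apply (ex_series_ratio_half _ N). intros n Hn.
  rewrite kummer_term_S, Cmod_mult by exact hc.
  pose proof (Cmod_ge_0 (kummer_coef a c n * z ^ n)). specialize (HN n Hn). nra.
Qed.

Lemma cos_term_bound p z n :
  (Cmod (cos_coef p n * z ^ n) <= / INR (fact n) * Cmod (p * z) ^ n)%R.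
Proof.
  assert (Hpos : (0 <= / INR (fact n) * Cmod (p * z) ^ n)%R).
  { apply Rmult_le_pos; [apply Rlt_le, Rinv_0_lt_compat, INR_fact_lt_0 | apply pow_le, Cmod_ge_0]. }
  unfold cos_coef. destruct (Nat.even n).
  - assert (Hm1 : Cmod (-1) = 1%R) by (rewrite Cmod_R, Rabs_left by lra; lra).
    rewrite Cmod_mult, Cmod_div, Cmod_mult, !Cmod_pow, Hm1, Cmod_nC, Cmod_mult
      by apply nC_fact_neq_0.
    rewrite pow1, Rpow_mult_distr. right. field. apply INR_fact_neq_0.
  - rewrite Cmult_0_l, Cmod_0. exact Hpos.
Qed.

Lemma ex_series_cos p z : ex_series (fun n => Cmod (cos_coef p n * z ^ n)).
Proof.
  apply (@ex_series_le R_AbsRing R_CompleteNormedModule _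
           (fun n => / INR (fact n) * Cmod (p * z) ^ n)%R).
  - intro n. change (Rabs (Cmod (cos_coef p n * z ^ n)) <= / INR (fact n) * Cmod (p * z) ^ n)%R.
    rewrite Rabs_pos_eq by apply Cmod_ge_0. apply cos_term_bound.
  - exists (exp (Cmod (p * z))). apply is_pseries_R, is_exp_Reals.
Qed.

Lemma sum_n_cos_even p z K :
  sum_n (fun k => (-1) ^ k * (p * z) ^ (2 * k) / nC (fact (2 * k))) K
  = sum_n (fun n => cos_coef p n * z ^ n) (2 * K).
Proof.
  assert (Heven : forall k, cos_coef p (2 * k) * z ^ (2 * k)
                            = (-1) ^ k * (p * z) ^ (2 * k) / nC (fact (2 * k))).
  { intro k. unfold cos_coef. rewrite Nat.even_mul, Nat.div2_double, Cpow_mult_l. simpl.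
    field. apply nC_fact_neq_0. }
  assert (Hodd : forall k, cos_coef p (S (2 * k)) * z ^ S (2 * k) = 0).
  { intro k. unfold cos_coef. rewrite Nat.even_succ, Nat.odd_mul. simpl. ring. }
  induction K as [|K IH].
  - rewrite !sum_O. symmetry. exact (Heven 0%nat).
  - replace (2 * S K)%nat with (S (S (2 * K))) by lia.
    rewrite !sum_Sn, IH, Hodd. replace (S (S (2 * K))) with (2 * S K)%nat by lia.
    rewrite Heven. f_equal. symmetry. apply Cplus_0_r.
Qed.

Lemma is_series_cos p z : is_series (fun n => cos_coef p n * z ^ n) (ccos (p * z)).
Proof.
  pose proof (is_series_csum _ (ex_series_cos p z)) as H.
  replace (ccos (p * z)) with (csum (fun n => cos_coef p n * z ^ n)); [exact H|].
  symmetry. apply is_series_csum_unique. unfold is_series.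
  apply (filterlim_ext (fun K => sum_n (fun n => cos_coef p n * z ^ n) (2 * K))).
  - intro K. symmetry. apply sum_n_cos_even.
  - apply (filterlim_comp _ _ _ (fun K => (2 * K)%nat) _ eventually eventually); [|exact H].
    intros P [N HN]. exists N. intros K HK. apply HN. lia.
Qed.

Lemma is_series_kummer a c (hc : forall k : nat, c <> - nC k) z :
  is_series (fun n => kummer_coef a c n * z ^ n) (kummerM a c z).
Proof. exact (is_series_csum _ (ex_series_kummer a c hc z)). Qed.

Lemma is_series_cos_kummer a c p (hc : forall k : nat, c <> - nC k) z :
  is_series (fun n => conv (cos_coef p) (kummer_coef a c) n * z ^ n)
            (ccos (p * z) * kummerM a c z).
Proof.
  apply (is_series_ext _ _ _ (conv_pow _ _ z)).
  apply is_series_conv.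
  - apply is_series_cos.
  - now apply is_series_kummer.
  - apply ex_series_cos.
  - now apply ex_series_kummer.
Qed.

Lemma taylor_coef_cos_kummer a c p (hc : forall k : nat, c <> - nC k) (u : nat -> C)
  (hu : forall z : C, is_series (fun n => u n * z ^ n) (ccos (p * z) * kummerM a c z)) n :
  u n = conv (cos_coef p) (kummer_coef a c) n.
Proof.
  apply Ceq_minus. revert n. apply pseries_zero_coef. intro x.
  pose proof (is_series_minus _ _ _ _ (hu (RtoC x)) (is_series_cos_kummer a c p hc (RtoC x)))
    as H.
  set (l := ccos (p * RtoC x) * kummerM a c (RtoC x)) in H.
  replace (RtoC 0) with (plus l (opp l)) by apply Cplus_opp_r.
  revert H. apply is_series_ext. intro n.
  change (u n * RtoC x ^ n - conv (cos_coef p) (kummer_coef a c) n * RtoC x ^ n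
          = (u n - conv (cos_coef p) (kummer_coef a c) n) * RtoC x ^ n). ring.
Qed.

Theorem theorem2p8 (a c p : C) (u : nat -> C)
  (hc : forall k : nat, c <> - nC k)
  (hc2 : c <> 2)
  (hu : forall z : C,
      @is_series C_AbsRing C_NormedModule (fun n => u n * z ^ n)
        (ccos (p * z) * kummerM a c z)) :
  u 0%nat = 1 /\
  u 1%nat = a / c /\
  u 2%nat = / 2 * ((a ^ 2 + a) / (c ^ 2 + c) - p ^ 2) /\
  u 3%nat = a / (6 * c) * ((a + 1) * (a + 2) / ((c + 1) * (c + 2)) - 3 * p ^ 2) /\
  u 4%nat = / 24 * ( - (6 * a * (a + 1) * p ^ 2) / (c * (c + 1))
                     + a * (a + 1) * (a + 2) * (a + 3) / (c * (c + 1) * (c + 2) * (c + 3))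
                     + p ^ 4) /\
  u 5%nat = a / (120 * c) * ( - (10 * (a + 1) * (a + 2) * p ^ 2) / ((c + 1) * (c + 2))
                     + (a + 1) * (a + 2) * (a + 3) * (a + 4) / ((c + 1) * (c + 2) * (c + 3) * (c + 4))
                     + 5 * p ^ 4) /\
  (forall n : nat, (5 <= n)%nat ->
     u (S n) = beta0 a c n * u n + beta1 a c p n * u (n - 1)%nat
             + beta2 a c p n * u (n - 2)%nat + beta3 a c p n * u (n - 3)%nat
             + beta4 a c p n * u (n - 4)%nat + beta5 a c p n * u (n - 5)%nat).
Proof.
  assert (Hcoef := taylor_coef_cos_kummer a c p hc u hu).
  destruct (cos_kummer_initial_coefs a c p u hc Hcoef) as (H0 & H1 & H2 & H3 & H4 & H5).
  repeat (split; [assumption|]).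
  intros n Hn. rewrite !Hcoef.
  apply (beta_recurrence a c p _ (conv (theta (cos_coef p)) (kummer_coef a c))); try assumption.
  - apply coupled_rec1; [apply cos_coef_ode | now apply kummer_coef_ode].
  - apply coupled_rec2; [apply cos_coef_ode | now apply kummer_coef_ode].
Qed.
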